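(* For the gossip USD, distinct opinions $i,j\in[k]$, $\varepsilon\in[0,1]$, and every $t\ge1$, writing $\delta^{(\varepsilon)}_t=\alpha_t(i)-(1+\varepsilon)\alpha_t(j)$ and $\delta_t=\delta^{(0)}_t$: (1) $\mathbb E_{t-1}[\delta^{(\varepsilon)}_t]=\delta^{(\varepsilon)}_{t-1}\big(\alpha_{t-1}(i)+\alpha_{t-1}(j)+2(1-\beta_{t-1})\big)+\varepsilon\,\alpha_{t-1}(i)\alpha_{t-1}(j)$. In particular, if $\beta_{t-1}>0$, then $\mathbb E_{t-1}[\delta_t]=\delta_{t-1}\Big(1+\alpha_{t-1}(i)+\alpha_{t-1}(j)-\frac{\gamma_{t-1}+\psi_{t-1}}{\beta_{t-1}}\Big)$. (2) $\mathrm{Var}_{t-1}[\delta_t]\ge\frac{(1-\beta_{t-1})^2}{n}\big(\alpha_{t-1}(i)+\alpha_{t-1}(j)\big)$. (3) Conditioned on $\mathcal F_{t-1}$, $\delta^{(\varepsilon)}_t-\mathbb E_{t-1}[\delta^{(\varepsilon)}_t]$ satisfies the $\big(\frac{2(1+\varepsilon)}{n},\ \frac2n(\alpha_{t-1}(i)+(1+\varepsilon)^2\alpha_{t-1}(j))\big)$-Bernstein condition.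
   Context: Vertex set $V$, $|V|=n$; opinions in $\Sigma=[k]\cup\{\bot\}$ ($\bot$ = undecided). USD update rule: $\mathsf{update}(\sigma_1,\sigma_2)=\bot$ if $\sigma_1,\sigma_2\in[k]$ and $\sigma_1\ne\sigma_2$; $=\sigma_2$ if $\sigma_1=\bot$; $=\sigma_1$ otherwise. Gossip USD: given $\mathrm{opn}_t\in\Sigma^V$, every $u\in V$ independently picks $v$ uniformly from $V$ and sets $\mathrm{opn}_{t+1}(u)=\mathsf{update}(\mathrm{opn}_t(u),\mathrm{opn}_t(v))$. Notation: $\alpha_t(i)=|\{u:\mathrm{opn}_t(u)=i\}|/n$, $\beta_t=\sum_{i\in[k]}\alpha_t(i)$, $\gamma_t=\sum_{i\in[k]}\alpha_t(i)^2$, $\psi_t=\beta_t(2\beta_t-1)-\gamma_t$. $(\mathcal F_t)$ is the natural filtration; $\mathbb E_{t-1},\mathrm{Var}_{t-1}$ are conditional on $\mathcal F_{t-1}$. Bernstein condition: for $D,s\ge0$, $X$ satisfies the $(D,s)$-Bernstein condition if $\mathbb E[e^{\lambda X}]\le\exp\!\big(\frac{\lambda^2 s/2}{1-|\lambda|D/3}\big)$ for all real $\lambda$ with $|\lambda|D<3$ (one-sided: only for $\lambda\ge0$). Conditioned on $\mathcal F_{t-1}$: the same with $\mathbb E_{t-1}$, almost surely. *)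

From HB Require Import structures.
From mathcomp Require Import all_boot all_order all_algebra.
From mathcomp Require Import all_classical all_reals all_analysis.
Set Implicit Arguments. Unset Strict Implicit. Unset Printing Implicit Defensive.
Import Order.TTheory GRing.Theory Num.Theory.
Local Open Scope ring_scope.

(* Opinions Sigma = [k] u {bot}: [Some a] is opinion a, [None] is undecided. *)
Definition update (k : nat) (s1 s2 : option 'I_k) : option 'I_k :=
  match s1, s2 with
  | Some a, Some b => if a == b then Some a else None
  | None, _ => s2
  | Some a, None => Some a
  end.

Definition config (V : finType) (k : nat) := {ffun V -> option 'I_k}.

(* One gossip round: g u is the vertex v sampled by u. *)
Definition step (V : finType) (k : nat) (c : config V k) (g : {ffun V -> V})
  : config V k := [ffun u => update (c u) (c (g u))].

Definition run (V : finType) (k : nat) (c0 : config V k) (hist : seq {ffun V -> V})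
  : config V k := foldl (@step V k) c0 hist.

Section Quantities.
Variables (R : realType) (V : finType) (k : nat).

Definition alpha (c : config V k) (i : 'I_k) : R :=
  #|[set u | c u == Some i]|%:R / #|V|%:R.
Definition beta (c : config V k) : R := \sum_(i < k) alpha c i.
Definition gamma (c : config V k) : R := \sum_(i < k) alpha c i ^+ 2.
Definition psi (c : config V k) : R := beta c * (2 * beta c - 1) - gamma c.

Definition deltaE (eps : R) (i j : 'I_k) (c : config V k) : R :=
  alpha c i - (1 + eps) * alpha c j.

(* Conditional expectation, given F_{t-1} with opn_{t-1} = c, of X(opn_t):
   every vertex picks v uniformly and independently, i.e. the choice function
   g is uniform on {ffun V -> V}. *)
Definition condE (c : config V k) (X : config V k -> R) : R :=
  (#|{ffun V -> V}|%:R)^-1 * \sum_(g : {ffun V -> V}) X (step c g).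

Definition condVar (c : config V k) (X : config V k -> R) : R :=
  condE c (fun c' => (X c' - condE c X) ^+ 2).

Definition condBernstein (c : config V k) (Y : config V k -> R) (D s : R) : Prop :=
  forall lam : R, `|lam| * D < 3 ->
    condE c (fun c' => expR (lam * Y c')) <=
    expR ((lam ^+ 2 * s / 2) / (1 - `|lam| * D / 3)).

End Quantities.

Arguments alpha {R V k}. Arguments beta {R V k}. Arguments gamma {R V k}.
Arguments psi {R V k}. Arguments deltaE {R V k}. Arguments condE {R V k}.
Arguments condVar {R V k}. Arguments condBernstein {R V k}.

From HB Require Import structures.
From mathcomp Require Import all_boot all_order all_algebra.
From mathcomp Require Import all_classical all_reals all_analysis.
From mathcomp Require Import ring lra zify.
Set Implicit Arguments. Unset Strict Implicit. Unset Printing Implicit Defensive.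
Import Order.TTheory GRing.Theory Num.Theory.
Local Open Scope ring_scope.

(* Given opn_{t-1} = c, the quantity delta^(eps)_t is a sum over the vertices u
   of independent terms [contrib (c u) (c (g u))], each depending only on the
   uniformly sampled vertex g u and vanishing unless the opinions involved lie in
   {i, j, undecided}.  The conditional mean and variance are therefore sums of
   per-vertex means and variances, explicit in the counts N_i, N_j, N_undecided;
   the variance bound (2) is a polynomial inequality in these counts with an
   explicit nonnegative certificate.  For (3), the moment generating function of
   the centred sum factorises over the vertices, every centred term is bounded by
   2(1+eps)/n, and exp x <= 1 + x + x^2 / (2 (1 - |x|/3)) for |x| < 3 gives the
   Bernstein condition with the sum of the variances, at most
   2/n (alpha_i + (1+eps)^2 alpha_j), as variance proxy. *)

Lemma two_mul_3exp_le_fact (m : nat) : (2 * 3 ^ m <= m.+2`!)%N.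
Proof.
elim: m => [|m IHm] //; rewrite factS expnS mulnCA.
by apply: leq_mul.
Qed.

Lemma geometric_sum_le (R : realFieldType) (r : R) (m : nat) :
  0 <= r < 1 -> \sum_(i < m) r ^+ i <= (1 - r)^-1.
Proof.
move=> /andP[r_ge0 r_lt1]; have r1_gt0 : 0 < 1 - r by rewrite subr_gt0.
have -> : \sum_(i < m) r ^+ i = (1 - r ^+ m) / (1 - r).
  apply: (@mulIf _ (1 - r)); first by rewrite gt_eqF.
  by rewrite mulfVK ?gt_eqF // mulrC -opprB mulNr -subrX1 opprB.
by rewrite -[leRHS]mul1r ler_pM2r ?invr_gt0 // gerBl exprn_ge0.
Qed.

Lemma exp_coeff_le_geometric (R : realFieldType) (x : R) (m : nat) :
  x ^+ m.+2 / m.+2`!%:R <= x ^+ 2 / 2 * (`|x| / 3) ^+ m.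
Proof.
have fact_gt0 : 0 < m.+2`!%:R :> R by rewrite ltr0n fact_gt0.
have pow_gt0 : 0 < 2 * 3 ^+ m :> R by rewrite mulr_gt0 // exprn_gt0.
have pow_le_fact : 2 * 3 ^+ m <= m.+2`!%:R :> R.
  by rewrite -natrX -natrM ler_nat two_mul_3exp_le_fact.
have abs_pow : `|x| ^+ m.+2 = x ^+ 2 * `|x| ^+ m.
  by rewrite -addn2 exprD mulrC real_normK ?num_real.
have -> : x ^+ 2 / 2 * (`|x| / 3) ^+ m = x ^+ 2 * `|x| ^+ m / (2 * 3 ^+ m).
  by rewrite expr_div_n; field; rewrite expf_neq0.
apply: (@le_trans _ _ (`|x| ^+ m.+2 / m.+2`!%:R)).
  by rewrite ler_pM2r ?invr_gt0 // -normrX ler_norm.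
by rewrite abs_pow ler_wpM2l ?(mulr_ge0 (sqr_ge0 x)) ?exprn_ge0 // lef_pV2 ?posrE.
Qed.

(* Compare the tail of the exponential series with a geometric series of
   ratio |x|/3, using (m+2)! >= 2 * 3^m. *)
Lemma expR_le_Bernstein (R : realType) (x : R) : `|x| < 3 ->
  expR x <= 1 + x + x ^+ 2 / (2 * (1 - `|x| / 3)).
Proof.
move=> x_lt3; rewrite /expR; apply: limr_le; first exact: is_cvg_series_exp_coeff.
exists 2%N => // m /= m_ge2.
have -> : m = (m - 2).+2 by lia.
rewrite /series /= big_mkord !big_ord_recl /= /exp_coeff /= !expr0 expr1 !divr1.
rewrite addrA lerD2l.
have ratio_ge0 : 0 <= `|x| / 3 < 1.
  by apply/andP; split; [rewrite divr_ge0 | rewrite ltr_pdivrMr //; lra].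
apply: (@le_trans _ _ (\sum_(i < m - 2) x ^+ 2 / 2 * (`|x| / 3) ^+ i)).
  by apply: ler_sum => i _; exact: exp_coeff_le_geometric.
rewrite -mulr_sumr invfM mulrA ler_wpM2l ?geometric_sum_le //.
by rewrite divr_ge0 // sqr_ge0.
Qed.

Section UniformChoice.
Variables (R : realType) (V : finType).
Hypothesis V_gt0 : (0 < #|V|)%N.
Local Notation n := (#|V|%:R : R).

Let n_gt0 : 0 < n. Proof. by rewrite ltr0n. Qed.
Let n_neq0 : n != 0. Proof. by rewrite gt_eqF. Qed.
Let sumr_cst (x : R) : \sum_(v : V) x = n * x.
Proof. by rewrite sumr_const mulr_natl. Qed.

Definition mean (f : V -> R) : R := n^-1 * \sum_v f v.

Definition variance (f : V -> R) : R := mean (fun v => (f v - mean f) ^+ 2).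

(* A uniform map g : V -> V amounts to independent uniform choices g u. *)
Definition ffun_mean (F : {ffun V -> V} -> R) : R :=
  (#|{ffun V -> V}|%:R)^-1 * \sum_g F g.

Lemma mean_cst (x : R) : mean (fun _ => x) = x.
Proof. by rewrite /mean sumr_cst mulKf. Qed.

Lemma mean_ge0 (f : V -> R) : (forall v, 0 <= f v) -> 0 <= mean f.
Proof. by move=> f_ge0; rewrite mulr_ge0 ?invr_ge0 ?ler0n ?sumr_ge0. Qed.

Lemma ler_mean (f h : V -> R) : (forall v, f v <= h v) -> mean f <= mean h.
Proof. by move=> le_fh; rewrite ler_wpM2l ?invr_ge0 ?ler0n ?ler_sum. Qed.

Lemma sum_sub_mean (f : V -> R) : \sum_v (f v - mean f) = 0.
Proof. by rewrite sumrB sumr_cst /mean mulVKf ?subrr. Qed.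

Lemma varianceE (f : V -> R) :
  variance f = mean (fun v => f v ^+ 2) - mean f ^+ 2.
Proof.
rewrite /variance; set m := mean f.
have -> : (fun v => (f v - m) ^+ 2) = fun v => f v ^+ 2 + (- (2 * m)) * f v + m ^+ 2.
  by apply: funext => v; ring.
rewrite /mean !big_split /= -mulr_sumr sumr_cst /m /mean.
by field.
Qed.

Lemma variance_cst (x : R) : variance (fun _ => x) = 0.
Proof. by rewrite /variance !mean_cst subrr expr0n. Qed.

Lemma variance_le_mean_sqr (f : V -> R) :
  variance f <= mean (fun v => f v ^+ 2).
Proof. by rewrite varianceE gerBl sqr_ge0. Qed.

Lemma dev_mean_le (f : V -> R) (lo hi : R) :
  (forall v, lo <= f v <= hi) -> forall v, `|f v - mean f| <= hi - lo.
Proof.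
move=> f_bnd v.
have lo_le : lo <= mean f.
  by rewrite -[lo]mean_cst; apply: ler_mean => w; case/andP: (f_bnd w).
have le_hi : mean f <= hi.
  by rewrite -[hi]mean_cst; apply: ler_mean => w; case/andP: (f_bnd w).
case/andP: (f_bnd v) => lo_le_f f_le_hi.
by rewrite ler_norml; apply/andP; split; lra.
Qed.

Lemma mean_expR_le (f : V -> R) (D lam : R) :
  (forall v, `|f v - mean f| <= D) -> `|lam| * D < 3 ->
  mean (fun v => expR (lam * (f v - mean f))) <=
  expR (lam ^+ 2 * variance f / 2 / (1 - `|lam| * D / 3)).
Proof.
move=> dev_le lamD_lt3.
have den_gt0 : 0 < 1 - `|lam| * D / 3 by lra.
set b := lam ^+ 2 / (2 * (1 - `|lam| * D / 3)).
have pointwise v : expR (lam * (f v - mean f)) <=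
    1 + lam * (f v - mean f) + b * (f v - mean f) ^+ 2.
  have lam_dev : `|lam * (f v - mean f)| <= `|lam| * D.
    by rewrite normrM ler_wpM2l.
  apply: le_trans; first by apply: expR_le_Bernstein; lra.
  rewrite lerD2l exprMn mulrAC ler_wpM2r ?sqr_ge0 // ler_wpM2l ?sqr_ge0 //.
  by rewrite lef_pV2 ?posrE; lra.
apply: le_trans; first exact: ler_mean pointwise.
apply: le_trans (expR_ge1Dx _).
rewrite /mean !big_split /= -!mulr_sumr sum_sub_mean sumr_cst.
rewrite le_eqVlt; apply/orP; left; apply/eqP.
rewrite /variance /mean /b; field; rewrite n_neq0 andbT; apply/eqP; lra.
Qed.

Lemma ffun_mean_prod (f : V -> V -> R) :
  ffun_mean (fun g => \prod_u f u (g u)) = \prod_u mean (f u).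
Proof.
rewrite /ffun_mean /mean big_split /= -bigA_distr_bigA prodr_const card_ffun.
by rewrite natrX exprVn.
Qed.

Lemma ffun_mean_sumr (T : finType) (F : T -> {ffun V -> V} -> R) :
  ffun_mean (fun g => \sum_x F x g) = \sum_x ffun_mean (F x).
Proof. by rewrite /ffun_mean exchange_big mulr_sumr. Qed.

Lemma ffun_mean_coord (h : V -> R) (u : V) :
  ffun_mean (fun g => h (g u)) = mean h.
Proof.
pose f x v := if x == u then h v else 1.
have -> : (fun g : {ffun V -> V} => h (g u)) = fun g => \prod_x f x (g x).
  apply: funext => g; rewrite (bigD1 u) //= /f eqxx big1 ?mulr1 //.
  by move=> x /negbTE ->.
rewrite ffun_mean_prod (bigD1 u) //= /f eqxx big1 ?mulr1 //.
by move=> x /negbTE ->; rewrite mean_cst.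
Qed.

Lemma ffun_mean_coord2 (a b : V -> R) (u w : V) : u != w ->
  ffun_mean (fun g => a (g u) * b (g w)) = mean a * mean b.
Proof.
move=> uw; have wu : (w == u) = false by rewrite eq_sym (negbTE uw).
pose f x v := if x == u then a v else if x == w then b v else 1.
have -> : (fun g : {ffun V -> V} => a (g u) * b (g w)) = fun g => \prod_x f x (g x).
  apply: funext => g; rewrite (bigD1 u) //= (bigD1 w) 1?eq_sym //=.
  rewrite /f eqxx wu eqxx big1 ?mulr1 //.
  by move=> x /andP[/negbTE -> /negbTE ->].
rewrite ffun_mean_prod (bigD1 u) //= (bigD1 w) 1?eq_sym //=.
rewrite /f eqxx wu eqxx big1 ?mulr1 //.
by move=> x /andP[/negbTE -> /negbTE ->]; rewrite mean_cst.
Qed.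

Lemma ffun_mean_sum (h : V -> V -> R) :
  ffun_mean (fun g => \sum_u h u (g u)) = \sum_u mean (h u).
Proof. by rewrite ffun_mean_sumr; apply: eq_bigr => u _; exact: ffun_mean_coord. Qed.

(* Cross terms of independent centred coordinates have mean zero. *)
Lemma ffun_variance_sum (h : V -> V -> R) :
  ffun_mean (fun g => (\sum_u h u (g u) - \sum_u mean (h u)) ^+ 2) =
  \sum_u variance (h u).
Proof.
pose y u v := h u v - mean (h u).
have -> : (fun g : {ffun V -> V} => (\sum_u h u (g u) - \sum_u mean (h u)) ^+ 2)
    = fun g => \sum_u \sum_w y u (g u) * y w (g w).
  apply: funext => g; rewrite -sumrB expr2 mulr_suml.
  by apply: eq_bigr => u _; rewrite mulr_sumr.
rewrite ffun_mean_sumr; apply: eq_bigr => u _.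
rewrite ffun_mean_sumr (bigD1 u) //= big1 ?addr0.
  by rewrite (ffun_mean_coord (fun v => y u v ^+ 2)).
move=> w wu; rewrite ffun_mean_coord2 1?eq_sym //.
by rewrite /mean sum_sub_mean !mulr0 mul0r.
Qed.

(* The moment generating function of a sum of independent coordinates is the
   product of theirs. *)
Lemma ffun_mean_expR_le (h : V -> V -> R) (D lam : R) :
  (forall u v, `|h u v - mean (h u)| <= D) -> `|lam| * D < 3 ->
  ffun_mean (fun g => expR (lam * (\sum_u h u (g u) - \sum_u mean (h u)))) <=
  expR (lam ^+ 2 * (\sum_u variance (h u)) / 2 / (1 - `|lam| * D / 3)).
Proof.
move=> dev_le lamD_lt3.
have -> : (fun g : {ffun V -> V} =>
      expR (lam * (\sum_u h u (g u) - \sum_u mean (h u))))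
    = fun g => \prod_u expR (lam * (h u (g u) - mean (h u))).
  by apply: funext => g; rewrite -sumrB mulr_sumr expR_sum.
rewrite (ffun_mean_prod (fun u v => expR (lam * (h u v - mean (h u))))).
rewrite mulr_sumr mulr_suml mulr_suml expR_sum.
apply: ler_prod => u _; apply/andP; split.
  by apply: mean_ge0 => v; exact: expR_ge0.
exact: mean_expR_le.
Qed.

End UniformChoice.

Section OneRound.
Variables (R : realType) (V : finType) (k : nat) (c : config V k) (i j : 'I_k).
Hypotheses (V_gt0 : (0 < #|V|)%N) (hij : i != j).
Local Notation n := (#|V|%:R : R).

Let n_gt0 : 0 < n. Proof. by rewrite ltr0n. Qed.
Let n_neq0 : n != 0. Proof. by rewrite gt_eqF. Qed.
Let hji : j != i. Proof. by rewrite eq_sym. Qed.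

Definition opinion_count (o : option 'I_k) : R := \sum_u (c u == o)%:R.

Local Notation Ni := (opinion_count (Some i)).
Local Notation Nj := (opinion_count (Some j)).
Local Notation Nu := (opinion_count None).

Lemma alphaE (c' : config V k) (l : 'I_k) :
  alpha c' l = mean (fun u => (c' u == Some l)%:R : R).
Proof.
rewrite /alpha /mean mulrC -sum1_card natr_sum big_mkcond /=.
by congr (_ * _); apply: eq_bigr => u _; rewrite inE; case: (_ == _).
Qed.

Lemma opinion_count_ge0 (o : option 'I_k) : 0 <= opinion_count o.
Proof. by apply: sumr_ge0 => u _; rewrite ler0n. Qed.

Lemma sum_over_opinions (F : option 'I_k -> R) :
  (forall x, x != i -> x != j -> F (Some x) = 0) ->
  \sum_u F (c u) = Ni * F (Some i) + Nj * F (Some j) + Nu * F None.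
Proof.
move=> F_other; rewrite /opinion_count !mulr_suml -!big_split /=.
apply: eq_bigr => u _; case: (c u) => [x|] /=; last by ring.
rewrite !(inj_eq Some_inj).
have [->|xi] := eqVneq x i; first by rewrite (negbTE hij) /=; ring.
have [->|xj] := eqVneq x j; first by rewrite /=; ring.
by rewrite F_other //=; ring.
Qed.

Lemma alpha_count (l : 'I_k) : alpha c l = opinion_count (Some l) / n.
Proof. by rewrite alphaE /mean mulrC. Qed.

Lemma opinion_count_total : Nu + \sum_(l < k) opinion_count (Some l) = n.
Proof.
transitivity (\sum_(u : V) (1 : R)); last by rewrite sumr_const.
rewrite /opinion_count exchange_big -big_split /=.
apply: eq_bigr => u _; case: (c u) => [x|] /=; last by rewrite big1 ?addr0.
rewrite add0r (bigD1 x) //= eqxx big1 ?addr0 // => l.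
by rewrite (inj_eq Some_inj) eq_sym => /negbTE ->.
Qed.

Lemma beta_count : beta c = 1 - Nu / n.
Proof.
rewrite /beta; under eq_bigr do rewrite alpha_count.
rewrite -mulr_suml -[X in X / n](addKr Nu) opinion_count_total.
by field.
Qed.

Lemma opinion_count_le : Ni + Nj + Nu <= n.
Proof.
rewrite -opinion_count_total addrC lerD2l (bigD1 i) //= (bigD1 j) 1?eq_sym //=.
by rewrite addrA lerDl sumr_ge0 // => l _; exact: opinion_count_ge0.
Qed.

Section Contribution.
Variable eps : R.

Definition contrib (a b : option 'I_k) : R :=
  ((update a b == Some i)%:R - (1 + eps) * (update a b == Some j)%:R) / n.

Lemma deltaE_step (g : {ffun V -> V}) :
  deltaE eps i j (step c g) = \sum_u contrib (c u) (c (g u)).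
Proof.
rewrite /deltaE !alphaE /mean /contrib -mulr_suml sumrB -mulr_sumr.
under eq_bigr do rewrite ffunE.
under [\sum_u ((step c g u == Some j)%:R)]eq_bigr do rewrite ffunE.
by ring.
Qed.

Lemma condE_deltaE_comp (G : R -> R) :
  condE c (G \o deltaE eps i j) =
  ffun_mean (fun g => G (\sum_u contrib (c u) (c (g u)))).
Proof.
by rewrite /condE /ffun_mean; congr (_ * _); apply: eq_bigr => g _; rewrite /= deltaE_step.
Qed.

Lemma condE_deltaE_sum :
  condE c (deltaE eps i j) = \sum_u mean (fun v => contrib (c u) (c v)).
Proof.
by rewrite (condE_deltaE_comp id) (ffun_mean_sum V_gt0 (fun u v => contrib (c u) (c v))).
Qed.

Lemma condVar_deltaE_sum :
  condVar c (deltaE eps i j) = \sum_u variance (fun v => contrib (c u) (c v)).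
Proof.
rewrite /condVar condE_deltaE_sum.
rewrite (condE_deltaE_comp (fun x => (x - \sum_u mean (fun v => contrib (c u) (c v))) ^+ 2)).
exact: (ffun_variance_sum V_gt0 (fun u v => contrib (c u) (c v))).
Qed.


Lemma contrib_eq0 (a b : option 'I_k) :
  update a b != Some i -> update a b != Some j -> contrib a b = 0.
Proof. by rewrite /contrib => /negbTE -> /negbTE ->; rewrite mulr0 subrr mul0r. Qed.

Lemma contrib_other_l (x : 'I_k) (b : option 'I_k) :
  x != i -> x != j -> contrib (Some x) b = 0.
Proof.
move=> xi xj; apply: contrib_eq0; case: b => [y|] /=;
  by [case: (x == y); rewrite ?(inj_eq Some_inj) | rewrite (inj_eq Some_inj)].
Qed.

Lemma contrib_other_r (a : option 'I_k) (x : 'I_k) :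
  x != i -> x != j -> contrib a (Some x) = 0.
Proof.
move=> xi xj; apply: contrib_eq0; case: a => [y|] /=;
  by [case: (y =P x) => [->|_]; rewrite ?(inj_eq Some_inj) | rewrite (inj_eq Some_inj)].
Qed.

Lemma contrib_to_i (a b : option 'I_k) : update a b = Some i -> contrib a b = n^-1.
Proof.
by rewrite /contrib => ->; rewrite eqxx (inj_eq Some_inj) (negbTE hij) /= mulr0 subr0 div1r.
Qed.

Lemma contrib_to_j (a b : option 'I_k) :
  update a b = Some j -> contrib a b = - (1 + eps) / n.
Proof.
by rewrite /contrib => ->; rewrite eqxx (inj_eq Some_inj) (negbTE hji) /= mulr1 sub0r.
Qed.

Lemma contrib_ii : contrib (Some i) (Some i) = n^-1.
Proof. by apply: contrib_to_i; rewrite /= eqxx. Qed.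
Lemma contrib_ij : contrib (Some i) (Some j) = 0.
Proof. by apply: contrib_eq0; rewrite /= (negbTE hij). Qed.
Lemma contrib_iu : contrib (Some i) None = n^-1.
Proof. exact: contrib_to_i. Qed.
Lemma contrib_ji : contrib (Some j) (Some i) = 0.
Proof. by apply: contrib_eq0; rewrite /= (negbTE hji). Qed.
Lemma contrib_jj : contrib (Some j) (Some j) = - (1 + eps) / n.
Proof. by apply: contrib_to_j; rewrite /= eqxx. Qed.
Lemma contrib_ju : contrib (Some j) None = - (1 + eps) / n.
Proof. exact: contrib_to_j. Qed.
Lemma contrib_ui : contrib None (Some i) = n^-1.
Proof. exact: contrib_to_i. Qed.
Lemma contrib_uj : contrib None (Some j) = - (1 + eps) / n.
Proof. exact: contrib_to_j. Qed.
Lemma contrib_uu : contrib None None = 0.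
Proof. exact: contrib_eq0. Qed.

Definition contribE := (contrib_ii, contrib_ij, contrib_iu, contrib_ji, contrib_jj,
  contrib_ju, contrib_ui, contrib_uj, contrib_uu).

Lemma contrib_row_other (x : 'I_k) :
  x != i -> x != j -> (fun v => contrib (Some x) (c v)) = fun _ => 0.
Proof. by move=> xi xj; apply: funext => v; exact: contrib_other_l. Qed.

Lemma mean_comp_contrib_row (phi : R -> R) (a : option 'I_k) : phi 0 = 0 ->
  mean (fun v => phi (contrib a (c v))) =
  (Ni * phi (contrib a (Some i)) + Nj * phi (contrib a (Some j))
   + Nu * phi (contrib a None)) / n.
Proof.
move=> phi0; rewrite /mean mulrC (@sum_over_opinions (fun b => phi (contrib a b))) //.
by move=> x xi xj; rewrite contrib_other_r.
Qed.

Lemma mean_contrib_row (a : option 'I_k) :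
  mean (fun v => contrib a (c v)) =
  (Ni * contrib a (Some i) + Nj * contrib a (Some j) + Nu * contrib a None) / n.
Proof. exact: (@mean_comp_contrib_row id). Qed.

Lemma mean_contrib_row_sqr (a : option 'I_k) :
  mean (fun v => contrib a (c v) ^+ 2) =
  (Ni * contrib a (Some i) ^+ 2 + Nj * contrib a (Some j) ^+ 2
   + Nu * contrib a None ^+ 2) / n.
Proof. by rewrite (@mean_comp_contrib_row (fun x => x ^+ 2)) // expr0n. Qed.

Lemma condE_deltaE_formula :
  condE c (deltaE eps i j) =
  deltaE eps i j c * (alpha c i + alpha c j + 2 * (1 - beta c)) +
  eps * alpha c i * alpha c j.
Proof.
rewrite condE_deltaE_sum (@sum_over_opinions (fun a => mean (fun v => contrib a (c v)))).
  rewrite !mean_contrib_row !contribE /deltaE !alpha_count beta_count.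
  by field.
by move=> x xi xj; rewrite contrib_row_other // mean_cst.
Qed.

Lemma contrib_bounds (a b : option 'I_k) : 0 <= eps ->
  - (1 + eps) / n <= contrib a b <= n^-1.
Proof.
move=> eps_ge0; have n_inv_ge0 : 0 <= n^-1 by rewrite invr_ge0 ltW.
have j_val_le0 : - (1 + eps) / n <= 0.
  by rewrite mulNr oppr_le0 divr_ge0 // ?addr_ge0 // ltW.
have [/contrib_to_i ->|not_i] := eqVneq (update a b) (Some i).
  by rewrite lexx andbT (le_trans j_val_le0).
have [/contrib_to_j ->|not_j] := eqVneq (update a b) (Some j).
  by rewrite lexx (le_trans j_val_le0).
by rewrite contrib_eq0 // j_val_le0.
Qed.

Lemma contrib_dev_le (a : option 'I_k) (v : V) : 0 <= eps ->
  `|contrib a (c v) - mean (fun w => contrib a (c w))| <= 2 * (1 + eps) / n.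
Proof.
move=> eps_ge0.
apply: le_trans (dev_mean_le V_gt0 (fun w => contrib_bounds a (c w) eps_ge0) v) _.
rewrite -subr_ge0 (_ : _ - _ = eps / n); first by rewrite divr_ge0 // ltW.
by field.
Qed.

Lemma sum_variance_contrib_le : 0 <= eps ->
  \sum_u variance (fun v => contrib (c u) (c v)) <=
  2 / n * (alpha c i + (1 + eps) ^+ 2 * alpha c j).
Proof.
move=> eps_ge0.
apply: (@le_trans _ _ (\sum_u mean (fun v => contrib (c u) (c v) ^+ 2))).
  by apply: ler_sum => u _; exact: variance_le_mean_sqr.
rewrite (@sum_over_opinions (fun a => mean (fun v => contrib a (c v) ^+ 2))); last first.
  by move=> x xi xj; rewrite /mean big1 ?mulr0 // => v _; rewrite contrib_other_l ?expr0n.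
rewrite !mean_contrib_row_sqr !contribE !alpha_count.
have := opinion_count_le.
have := opinion_count_ge0 (Some i); have := opinion_count_ge0 (Some j).
have := opinion_count_ge0 None => Nu_ge0 Nj_ge0 Ni_ge0 N_le.
rewrite -subr_ge0; set G := (X in 0 <= X).
have -> : G = (Ni * (2 * n - Ni - 2 * Nu) +
               (1 + eps) ^+ 2 * Nj * (2 * n - Nj - 2 * Nu)) / n ^+ 3.
  by rewrite /G; field.
apply: divr_ge0; last by rewrite exprn_ge0 // ltW.
by apply: addr_ge0; apply: mulr_ge0; rewrite ?mulr_ge0 ?sqr_ge0 //; lra.
Qed.

Lemma condVar_deltaE_ge : 0 <= eps ->
  (1 - beta c) ^+ 2 / n * (alpha c i + alpha c j) <= condVar c (deltaE eps i j).
Proof.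
move=> eps_ge0; rewrite condVar_deltaE_sum.
rewrite (@sum_over_opinions (fun a => variance (fun v => contrib a (c v)))); last first.
  by move=> x xi xj; rewrite contrib_row_other // variance_cst.
rewrite !varianceE //= !mean_contrib_row_sqr !mean_contrib_row.
rewrite !contribE !alpha_count beta_count.
have := opinion_count_le.
have := opinion_count_ge0 (Some i); have := opinion_count_ge0 (Some j).
have := opinion_count_ge0 None => Nu_ge0 Nj_ge0 Ni_ge0 N_le.
rewrite -subr_ge0; set G := (X in 0 <= X).
have -> : G = (Ni * (Ni + Nu) * (n - Ni - Nu)
               + (1 + eps) ^+ 2 * Nj * (Nj + Nu) * (n - Nj - Nu)
               + (2 + eps) ^+ 2 * Nu * Ni * Nj + eps * (2 + eps) * Nu ^+ 2 * Nj
               + Nu * (n - Ni - Nj - Nu) * (Ni + (1 + eps) ^+ 2 * Nj)) / n ^+ 4.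
  by rewrite /G; field.
have weighted_ge0 : 0 <= Ni + (1 + eps) ^+ 2 * Nj.
  by apply: addr_ge0 => //; apply: mulr_ge0 => //; exact: sqr_ge0.
apply: divr_ge0; last by rewrite exprn_ge0 // ltW.
by repeat apply: addr_ge0; repeat apply: mulr_ge0; lra.
Qed.

Lemma condBernstein_deltaE : 0 <= eps ->
  condBernstein c (fun c' => deltaE eps i j c' - condE c (deltaE eps i j))
    (2 * (1 + eps) / n) (2 / n * (alpha c i + (1 + eps) ^+ 2 * alpha c j)).
Proof.
move=> eps_ge0 lam lamD_lt3.
rewrite condE_deltaE_sum.
rewrite (condE_deltaE_comp
  (fun x => expR (lam * (x - \sum_u mean (fun v => contrib (c u) (c v)))))).
apply: le_trans (ffun_mean_expR_le V_gt0 (h := fun u v => contrib (c u) (c v))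
  (fun u v => contrib_dev_le (c u) v eps_ge0) lamD_lt3) _.
have den_gt0 : 0 < 1 - `|lam| * (2 * (1 + eps) / n) / 3 by lra.
rewrite ler_expR !ler_pM2r ?invr_gt0 //.
by apply: ler_wpM2l; [exact: sqr_ge0 | exact: sum_variance_contrib_le].
Qed.

End Contribution.

Lemma condE_deltaE0 : 0 < beta c :> R ->
  condE c (deltaE (0 : R) i j) =
  deltaE (0 : R) i j c * (1 + alpha c i + alpha c j - (gamma c + psi c) / beta c).
Proof.
move=> beta_gt0.
have -> : (gamma c + psi c) / beta c = 2 * beta c - 1 :> R.
  by rewrite /psi addrC subrK mulrAC mulfV ?mul1r ?gt_eqF.
by rewrite condE_deltaE_formula; ring.
Qed.


End OneRound.

Theorem mainTheorem6 (R : realType) (V : finType) (k : nat) (i j : 'I_k)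
    (hV : (0 < #|V|)%N) (hij : i != j)
    (c0 : config V k) (t : nat) (ht : (1 <= t)%N)
    (hist : seq {ffun V -> V}) (hsz : size hist = t.-1) :
  let n : R := #|V|%:R in
  let c := run c0 hist in (* opn_{t-1} *)
  [/\ (forall eps : R, 0 <= eps <= 1 ->
        condE c (deltaE eps i j) =
        deltaE eps i j c * (alpha c i + alpha c j + 2 * (1 - beta c))
        + eps * alpha c i * alpha c j),
      (0 < beta (R:=R) c ->
        condE c (deltaE (0 : R) i j) =
        deltaE (0 : R) i j c *
          (1 + alpha c i + alpha c j - (gamma c + psi c) / beta c)),
      condVar c (deltaE (0 : R) i j) >=
        (1 - beta (R:=R) c) ^+ 2 / n * (alpha c i + alpha c j)
    & (forall eps : R, 0 <= eps <= 1 ->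
        condBernstein c
          (fun c' => deltaE eps i j c' - condE c (deltaE eps i j))
          (2 * (1 + eps) / n)
          (2 / n * (alpha c i + (1 + eps) ^+ 2 * alpha c j)))].
Proof.
move=> n c; split.
- by move=> eps _; exact: condE_deltaE_formula.
- exact: condE_deltaE0.
- exact: condVar_deltaE_ge.
- by move=> eps /andP[eps_ge0 _]; exact: condBernstein_deltaE.
Qed.
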